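(* Let $\mathcal{L}=(L,\wedge,\vee,0,1)$ be a complete lattice and let $C\subseteq L$ be a chain consisting of strongly irreducible elements of $L$. Then $\bigwedge C$ is strongly irreducible in $L$.
   Context: An element $p$ of a lattice is strongly irreducible if for all $a,b\in L$: $a\wedge b\leq p$ implies $a\leq p$ or $b\leq p$. *)

From mathcomp Require Import all_boot all_order.
Set Implicit Arguments. Unset Strict Implicit. Unset Printing Implicit Defensive.
Import Order.TTheory.
Local Open Scope order_scope.

Definition is_glb (d : Order.disp_t) (L : latticeType d) (C : L -> Prop) (m : L) : Prop :=
  (forall x, C x -> m <= x) /\ (forall y, (forall x, C x -> y <= x) -> y <= m).

Definition complete_inf (d : Order.disp_t) (L : latticeType d) (inf : (L -> Prop) -> L) : Prop :=
  forall C : L -> Prop, is_glb C (inf C).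

Definition strongly_irreducible (d : Order.disp_t) (L : latticeType d) (p : L) : Prop :=
  forall a b : L, a `&` b <= p -> a <= p \/ b <= p.

Definition is_chain (d : Order.disp_t) (L : latticeType d) (C : L -> Prop) : Prop :=
  forall x y, C x -> C y -> x <= y \/ y <= x.

From mathcomp Require Import all_boot all_order.
From Stdlib Require Import Classical.
Import Order.TTheory.
Local Open Scope order_scope.

(* If [a] fails below some [x] and [b] fails below some [y] of the chain, the
   smaller of [x] and [y] catches neither [a] nor [b], although it is strongly
   irreducible and lies above [a `&` b]. *)

Section ChainOfStronglyIrreducibles.

Variables (d : Order.disp_t) (L : latticeType d) (C : L -> Prop).
Hypothesis chainC : is_chain C.
Hypothesis irrC : forall c, C c -> strongly_irreducible c.

Lemma chain_lbound_meet {a b : L} :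
  (forall c, C c -> a `&` b <= c) ->
  (forall c, C c -> a <= c) \/ (forall c, C c -> b <= c).
Proof.
move=> meet_lb; apply: NNPP => /not_or_and [/not_all_ex_not [x ax] /not_all_ex_not [y by_]].
have [Cx nax] := imply_to_and _ _ ax; have [Cy nby] := imply_to_and _ _ by_.
case: (chainC x y Cx Cy) => [le_xy | le_yx].
- case: (irrC x Cx a b (meet_lb x Cx)) => [//| bx].
  exact/nby/(le_trans bx le_xy).
- case: (irrC y Cy a b (meet_lb y Cy)) => [ay | //].
  exact/nax/(le_trans ay le_yx).
Qed.

Lemma glb_chain_strongly_irreducible (m : L) :
  is_glb C m -> strongly_irreducible m.
Proof.
move=> [m_lb m_glb] a b le_ab_m.
have meet_lb c : C c -> a `&` b <= c by move=> Cc; exact: le_trans le_ab_m (m_lb c Cc).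
by case: (chain_lbound_meet meet_lb) => [a_lb | b_lb]; [left | right]; apply: m_glb.
Qed.

End ChainOfStronglyIrreducibles.

Theorem proposition1p13 (d : Order.disp_t) (L : tbLatticeType d)
  (inf : (L -> Prop) -> L) (Hinf : complete_inf inf)
  (C : L -> Prop) (HC : is_chain C)
  (Hirr : forall c, C c -> strongly_irreducible c) :
  strongly_irreducible (inf C).
Proof. exact: glb_chain_strongly_irreducible HC Hirr _ (Hinf C). Qed.
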